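(* Let $\epsilon\in(\frac12,1)$, $W\in\mathcal{P}(\mathcal{Y}|\mathcal{X})$ with $V_\epsilon(W)>0$, and $a>0$ with $a>\frac{2}{1-\epsilon}$. Let $(f,\varphi)$ be an $(N,R_N)$ constant composition code with $$R_N=C(W)+\sqrt{\frac{V_\epsilon(W)}{N}}\Phi^{-1}(\epsilon)-\frac1N\ln\Big(1-\epsilon-\frac2a\Big)$$ and common composition $Q$ satisfying $V(Q,W)<\frac1aV_\epsilon(W)[\Phi^{-1}(\epsilon)]^2$. Then $\bar{\mathrm{P}}_{\mathrm{e}}(f,\varphi)>\epsilon$.
   Context: $\mathcal{X},\mathcal{Y}$ finite; memoryless channel. An $(N,R)$ constant composition code: encoder $\{1,\dots,\lceil e^{NR}\rceil\}\to\mathcal{X}^N$ all of whose codewords have the same empirical distribution (common composition), decoder $\mathcal{Y}^N\to\mathcal{M}$; $\bar{\mathrm{P}}_{\mathrm{e}}$ is average error over uniform messages. $C(W)$ capacity; $\Phi$ standard Gaussian CDF; $q_P(y)=\sum_xP(x)W(y|x)$; $V(P,W)=\sum_{x,y}P(x)W(y|x)[\ln\frac{W(y|x)}{q_P(y)}-\sum_bW(b|x)\ln\frac{W(b|x)}{q_P(b)}]^2$; for $\epsilon\ge1/2$, $V_\epsilon(W)=\max_{Q:I(Q;W)=C(W)}V(Q,W)$. *)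

From HB Require Import structures.
From mathcomp Require Import all_boot all_order all_algebra.
From mathcomp Require Import all_classical all_reals all_analysis.
Set Implicit Arguments. Unset Strict Implicit. Unset Printing Implicit Defensive.
Import Order.TTheory GRing.Theory Num.Theory.
Local Open Scope classical_set_scope.
Local Open Scope ring_scope.

Section Defs.
Context {R : realType} {X Y : finType}.

Definition is_dist (P : X -> R) : Prop :=
  (forall x, 0 <= P x) /\ \sum_x P x = 1.

(* channel W in P(Y|X): W x y = W(y|x) *)
Definition is_channel (W : X -> Y -> R) : Prop :=
  forall x, (forall y, 0 <= W x y) /\ \sum_y W x y = 1.

Definition qout (P : X -> R) (W : X -> Y -> R) (y : Y) : R :=
  \sum_x P x * W x y.

(* mutual information I(P;W) (natural log); zero-probability terms vanish
   since they are multiplied by P(x)W(y|x) = 0 *)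
Definition mutinf (P : X -> R) (W : X -> Y -> R) : R :=
  \sum_x \sum_y P x * W x y * ln (W x y / qout P W y).

Definition cvar (P : X -> R) (W : X -> Y -> R) : R :=
  \sum_x \sum_y P x * W x y *
    (ln (W x y / qout P W y)
     - \sum_b W x b * ln (W x b / qout P W b)) ^+ 2.

Definition capacity (W : X -> Y -> R) : R :=
  sup [set r | exists P, is_dist P /\ r = mutinf P W].

(* V_eps(W) for eps >= 1/2: max of V(Q,W) over capacity-achieving Q *)
Definition Veps (W : X -> Y -> R) : R :=
  sup [set r | exists Q, [/\ is_dist Q, mutinf Q W = capacity W & r = cvar Q W]].

Definition composition (N : nat) (x : {ffun 'I_N -> X}) (a : X) : R :=
  (#|[set i | x i == a]|)%:R / N%:R.

Definition nmsg (N : nat) (Rt : R) : nat := `|Num.ceil (expR (N%:R * Rt))|%N.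

Definition prodW (W : X -> Y -> R) (N : nat) (x : {ffun 'I_N -> X})
    (y : {ffun 'I_N -> Y}) : R :=
  \prod_(i < N) W (x i) (y i).

Definition avg_err (W : X -> Y -> R) (N M : nat)
    (f : 'I_M -> {ffun 'I_N -> X}) (phi : {ffun 'I_N -> Y} -> 'I_M) : R :=
  M%:R^-1 * \sum_(m < M) \sum_(y | phi y != m) prodW W (f m) y.

End Defs.

Definition Phi {R : realType} (x : R) : R :=
  Rintegral lebesgue_measure `]-oo, x]%classic (normal_pdf 0 1).

(* Phi^{-1}(e) for e in (0,1): the (unique) x with Phi x = e, written as
   sup {x | Phi x <= e} *)
Definition Phiinv {R : realType} (e : R) : R :=
  sup [set x : R | Phi x <= e].

From HB Require Import structures.
From mathcomp Require Import all_boot all_order all_algebra.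
From mathcomp Require Import all_classical all_reals all_analysis.
From mathcomp Require Import measurable_realfun.
From mathcomp Require Import ring lra.
Set Implicit Arguments. Unset Strict Implicit. Unset Printing Implicit Defensive.
Import Order.TTheory GRing.Theory Num.Theory.
Local Open Scope ring_scope.

(* Chebyshev inequality plus a change of measure.  For a codeword x of
   composition Q, W^N(y|x) = exp(N I(Q;W) + S(y)) q_Q^N(y), where S(y) is a sum
   of N independent centred information densities, of second moment
   N V(Q,W).  Splitting on S(y) <= t gives
     W^N(y|x) <= e^(N I(Q;W) + t) q_Q^N(y) + W^N(y|x) S(y)^2 / t^2,
   and summing over the decoding sets bounds the probability of correct
   decoding by e^(N I(Q;W) + t) / M + N V(Q,W) / t^2.  For
   t = sqrt(N V_eps(W)) Phi^-1(eps), I(Q;W) <= C(W) and M >= e^(N R_N) make the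
   first term at most 1 - eps - 2/a, and the hypothesis on V(Q,W) makes the
   second one smaller than 1/a. *)

Section Composition.
Variables (R : realType) (X : finType) (N : nat) (x : {ffun 'I_N -> X}).

Lemma sum_word_card (g : X -> R) :
  \sum_(i < N) g (x i) = \sum_a (#|[set i | x i == a]%classic|)%:R * g a.
Proof.
rewrite (partition_big (fun i => x i) xpredT) //=; apply: eq_bigr => a _.
rewrite (eq_bigr (fun _ => g a)); last by move=> i /eqP ->.
rewrite (eq_bigl (fun i => i \in [set i | x i == a]%classic)); last first.
  by move=> i; apply/idP/idP; rewrite in_setE.
by rewrite sumr_const mulr_natl.
Qed.

Hypothesis N_gt0 : (0 < N)%N.

Lemma sum_word_composition (g : X -> R) :
  \sum_(i < N) g (x i) = N%:R * \sum_a composition x a * g a.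
Proof.
rewrite sum_word_card mulr_sumr; apply: eq_bigr => a _.
have N_neq0 : (N%:R : R) != 0 by rewrite pnatr_eq0 -lt0n.
by rewrite /composition mulrA [N%:R * _]mulrC divfK.
Qed.

Lemma composition_dist : is_dist (composition (R:=R) x).
Proof.
split=> [a|]; first by rewrite /composition divr_ge0.
have N_neq0 : (N%:R : R) != 0 by rewrite pnatr_eq0 -lt0n.
apply: (mulfI N_neq0); rewrite mulr1 -[in RHS](card_ord N) -sumr_const.
by rewrite (sum_word_composition (fun _ => 1)); under [in RHS]eq_bigr do rewrite mulr1.
Qed.

End Composition.

Lemma composition_gt0 (R : realType) (X : finType) (N : nat)
    (x : {ffun 'I_N -> X}) (i : 'I_N) :
  0 < composition (R:=R) x (x i).
Proof.
rewrite /composition divr_gt0 // ltr0n; last by apply: leq_ltn_trans (ltn_ord i).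
by apply/card_gt0P; exists i; rewrite in_setE /=.
Qed.

Section ProductDistribution.
Variables (R : realType) (Y : finType) (N : nat) (w : 'I_N -> Y -> R).
Hypothesis w_sum1 : forall i, \sum_b w i b = 1.

Lemma sum_prod_dist1 : \sum_(y : {ffun 'I_N -> Y}) \prod_i w i (y i) = 1.
Proof. by rewrite -(bigA_distr_bigA w) big1. Qed.

Lemma sum_prod_dist_sqr_centered (Z : 'I_N -> Y -> R) :
  (forall i, \sum_b w i b * Z i b = 0) ->
  \sum_(y : {ffun 'I_N -> Y}) (\prod_i w i (y i)) * (\sum_i Z i (y i)) ^+ 2
  = \sum_i \sum_b w i b * Z i b ^+ 2.
Proof.
move=> Z_centered.
(* [Z i (y i) * Z j (y j) * \prod_k w k (y k)] as one product over k, so that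
   its sum over y factorises; for i != j the factor at k = i is a zero mean. *)
pose F i j k b := w k b * ((if k == i then Z i b else 1) *
                           (if k == j then Z j b else 1)).
have expand (y : {ffun 'I_N -> Y}) :
    (\prod_i w i (y i)) * (\sum_i Z i (y i)) ^+ 2 =
    \sum_i \sum_j \prod_k F i j k (y k).
  rewrite expr2 mulr_suml mulr_sumr; apply: eq_bigr => i _.
  rewrite !mulr_sumr; apply: eq_bigr => j _.
  by rewrite !big_split /= -!big_mkcond /= !big_pred1_eq mulrA.
under eq_bigr do rewrite expand.
rewrite exchange_big /=; apply: eq_bigr => i _.
rewrite exchange_big /= (bigD1 i) //= [X in _ + X]big1 ?addr0 => [|j ji].
  rewrite -(bigA_distr_bigA (F i i)) (bigD1 i) //= [X in _ * X]big1 ?mulr1.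
    by apply: eq_bigr => b _; rewrite /F eqxx expr2.
  move=> k ki; rewrite /F (negbTE ki).
  by under eq_bigr do rewrite !mulr1.
rewrite -(bigA_distr_bigA (F i j)); apply/eqP/prodf_eq0; exists i => //.
rewrite /F eqxx [i == j]eq_sym (negbTE ji).
by under eq_bigr do rewrite mulr1; rewrite Z_centered.
Qed.

End ProductDistribution.

Section Channel.
Variables (R : realType) (X Y : finType) (W : X -> Y -> R).
Hypothesis W_channel : is_channel W.

Lemma channel_ge0 x y : 0 <= W x y.
Proof. by case: (W_channel x). Qed.

Lemma channel_sum1 x : \sum_y W x y = 1.
Proof. by case: (W_channel x). Qed.

Lemma sum_prodW1 N (x : {ffun 'I_N -> X}) : \sum_y prodW W x y = 1.
Proof. by apply: (@sum_prod_dist1 _ _ _ (W \o x)) => i; apply: channel_sum1. Qed.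

Lemma qout_ge_term (P : X -> R) x y :
  (forall x, 0 <= P x) -> P x * W x y <= qout P W y.
Proof.
move=> P_ge0; rewrite /qout (bigD1 x) //= lerDl.
by apply: sumr_ge0 => z _; rewrite mulr_ge0 ?channel_ge0.
Qed.

Lemma qout_dist (P : X -> R) : is_dist P -> is_dist (qout P W).
Proof.
move=> [P_ge0 P_sum1]; split=> [y|].
  by apply: sumr_ge0 => x _; rewrite mulr_ge0 ?channel_ge0.
rewrite /qout exchange_big /= -P_sum1; apply: eq_bigr => x _.
by rewrite -mulr_sumr channel_sum1 mulr1.
Qed.

(* ln u <= u - 1 bounds each term of I(P;W) by W(y|x). *)
Lemma mutinf_le_card (P : X -> R) : is_dist P -> mutinf P W <= #|X|%:R.
Proof.
move=> [P_ge0 _].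
have -> : (#|X|%:R : R) = \sum_x \sum_y W x y.
  by rewrite -sumr_const; apply: eq_bigr => x _; rewrite channel_sum1.
apply: ler_sum => x _; apply: ler_sum => y _.
have [->|PW_neq0] := eqVneq (P x * W x y) 0; first by rewrite mul0r channel_ge0.
have PW_gt0 : 0 < P x * W x y by rewrite lt_def PW_neq0 mulr_ge0 ?channel_ge0.
have PW_le_q := qout_ge_term x y P_ge0.
have q_gt0 : 0 < qout P W y by apply: lt_le_trans PW_le_q.
have W_gt0 : 0 < W x y.
  rewrite lt_def channel_ge0 andbT.
  by apply: contraNneq PW_neq0 => ->; rewrite mulr0.
have ln_le : ln (W x y / qout P W y) <= W x y / qout P W y - 1.
  have := @le_ln1Dx R (W x y / qout P W y - 1); rewrite addrCA subrr addr0; apply.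
  by rewrite ltrBrDl subrr divr_gt0.
have ratio_le1 : P x * W x y / qout P W y <= 1 by rewrite ler_pdivrMr // mul1r.
apply: (le_trans (ler_wpM2l (ltW PW_gt0) ln_le)).
have -> : P x * W x y * (W x y / qout P W y - 1)
          = W x y * (P x * W x y / qout P W y) - P x * W x y by ring.
have := ler_wpM2l (channel_ge0 x y) ratio_le1; lra.
Qed.

Lemma mutinf_le_capacity (P : X -> R) : is_dist P -> mutinf P W <= capacity W.
Proof.
move=> P_dist.
have bounded : has_sup [set r | exists P, is_dist P /\ r = mutinf P W]%classic.
  split; first by exists (mutinf P W), P.
  by exists #|X|%:R => r [P' [P'_dist ->]]; apply: mutinf_le_card.
by have := sup_upper_bound bounded; apply; exists P.
Qed.

End Channel.

Lemma Phi0 (R : realType) : Phi (0 : R) = 2^-1.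
Proof.
have pdf_even (x : R) : normal_pdf 0 1 x = normal_pdf 0 1 (- x).
  by rewrite /normal_pdf oner_eq0 /normal_fun !subr0 sqrrN.
have := ge0_symfun_integralT (@normal_pdf_ge0 R 0 1)
  (@continuous_normal_pdf R 0 1 (oner_neq0 R)) pdf_even.
rewrite integral_normal_pdf -set_itvcy /Phi /Rintegral.
have -> : (\int[lebesgue_measure]_(x in `]-oo, (0%R : R)]) (normal_pdf 0%R 1%R x)%:E)%E
        = (\int[lebesgue_measure]_(x in `[(0%R : R), +oo[) (normal_pdf 0%R 1%R x)%:E)%E.
  rewrite ge0_integration_by_substitution0 //.
  - by apply: eq_integral => x _; rewrite -pdf_even.
  - by apply/measurable_EFinP; exact: measurable_normal_pdf.
  - by move=> r; rewrite lee_fin normal_pdf_ge0.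
case: (\int[lebesgue_measure]_(x in `[(0%R : R), +oo[) (normal_pdf 0%R 1%R x)%:E)%E
  => [r /eqP| |] //=; last by rewrite gt0_muleNy.
  by rewrite -EFinM eqe => /eqP; lra.
by rewrite gt0_muley.
Qed.

(* Only [Phi 0 = 1/2] is used: 0 lies in the set defining [Phiinv eps], and if
   that set has no supremum, [sup] returns the junk value 0. *)
Lemma Phiinv_ge0 (R : realType) (eps : R) : 2^-1 <= eps -> 0 <= Phiinv eps.
Proof.
move=> eps_ge; have mem0 : [set x : R | Phi x <= eps]%classic 0 by rewrite /= Phi0.
have [bounded|unbounded] := pselect (has_sup [set x : R | Phi x <= eps]%classic).
  by have := sup_upper_bound bounded; apply.
by rewrite /Phiinv sup_out.
Qed.

Lemma nmsg_ge_expR (R : realType) (N : nat) (Rt : R) :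
  expR (N%:R * Rt) <= (nmsg N Rt)%:R.
Proof.
rewrite /nmsg natr_absz ger0_norm ?ceil_ge //.
by rewrite ceil_ge0 (lt_le_trans _ (expR_ge0 _)) // ltrN10.
Qed.

Lemma nmsg_gt0 (R : realType) (N : nat) (Rt : R) : (0 < nmsg N Rt)%N.
Proof. by rewrite -(ltr0n R) (lt_le_trans (expR_gt0 (N%:R * Rt)) (nmsg_ge_expR N Rt)). Qed.

Lemma expR_div_nmsg_le (R : realType) (N : nat) (Rt s c : R) :
  0 < c -> s - ln c <= N%:R * Rt -> expR s / (nmsg N Rt)%:R <= c.
Proof.
move=> c_gt0 s_le; have M_gt0 : (0 < (nmsg N Rt)%:R :> R) by rewrite ltr0n nmsg_gt0.
rewrite ler_pdivrMr // -[c in c * _]lnK ?posrE //.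
apply: le_trans (ler_wpM2l (expR_ge0 _) (nmsg_ge_expR N Rt)).
by rewrite -expRD ler_expR; lra.
Qed.

Section InformationDensity.
Variables (R : realType) (X Y : finType) (W : X -> Y -> R) (Q : X -> R).
Hypotheses (W_channel : is_channel W) (Q_dist : is_dist Q).

Definition cond_div (a : X) : R := \sum_b W a b * ln (W a b / qout Q W b).

Definition info_dev (a : X) (b : Y) : R := ln (W a b / qout Q W b) - cond_div a.

Lemma sum_info_dev (a : X) : \sum_b W a b * info_dev a b = 0.
Proof.
under eq_bigr do rewrite mulrBr.
by rewrite sumrB -mulr_suml channel_sum1 // mul1r subrr.
Qed.

Lemma mutinf_cond_div : mutinf Q W = \sum_a Q a * cond_div a.
Proof.
apply: eq_bigr => a _; rewrite mulr_sumr.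
by apply: eq_bigr => b _; rewrite mulrA.
Qed.

Lemma cvar_info_dev : cvar Q W = \sum_a Q a * \sum_b W a b * info_dev a b ^+ 2.
Proof.
apply: eq_bigr => a _; rewrite mulr_sumr.
by apply: eq_bigr => b _; rewrite mulrA.
Qed.

Lemma cvar_ge0 : 0 <= cvar Q W.
Proof.
rewrite cvar_info_dev; apply: sumr_ge0 => a _.
have [Q_ge0 _] := Q_dist.
rewrite mulr_ge0 //; apply: sumr_ge0 => b _.
by rewrite mulr_ge0 ?sqr_ge0 ?channel_ge0.
Qed.

Definition info_sum (N : nat) (x : {ffun 'I_N -> X}) (y : {ffun 'I_N -> Y}) : R :=
  \sum_i info_dev (x i) (y i).

Definition qout_prod (N : nat) (y : {ffun 'I_N -> Y}) : R :=
  \prod_i qout Q W (y i).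

Lemma qout_prod_ge0 N (y : {ffun 'I_N -> Y}) : 0 <= qout_prod y.
Proof. by apply: prodr_ge0 => i _; case: (qout_dist W_channel Q_dist). Qed.

Section Codeword.
Variables (N : nat) (x : {ffun 'I_N -> X}).
Hypotheses (N_gt0 : (0 < N)%N) (x_comp : composition x = Q).

Lemma prodW_expR (y : {ffun 'I_N -> Y}) : prodW W x y != 0 ->
  prodW W x y = expR (info_sum x y + N%:R * mutinf Q W) * qout_prod y.
Proof.
rewrite /prodW => /prodf_neq0 W_neq0.
have [Q_ge0 _] := Q_dist.
have W_gt0 i : 0 < W (x i) (y i) by rewrite lt_def W_neq0 ?channel_ge0.
have q_gt0 i : 0 < qout Q W (y i).
  apply: lt_le_trans (qout_ge_term W_channel _ _ Q_ge0).
  by rewrite mulr_gt0 // -x_comp composition_gt0.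
have -> : info_sum x y + N%:R * mutinf Q W =
          \sum_i ln (W (x i) (y i) / qout Q W (y i)).
  rewrite /info_sum /info_dev sumrB mutinf_cond_div.
  by rewrite (sum_word_composition x N_gt0 cond_div) x_comp subrK.
rewrite expR_sum /qout_prod -big_split /=; apply: eq_bigr => i _.
by rewrite lnK ?posrE ?divr_gt0 // divfK // gt_eqF.
Qed.

Lemma prodW_le_split (t : R) (y : {ffun 'I_N -> Y}) : 0 < t ->
  prodW W x y <= expR (N%:R * mutinf Q W + t) * qout_prod y
                 + prodW W x y * (info_sum x y ^+ 2 / t ^+ 2).
Proof.
move=> t_gt0.
have PW_ge0 : 0 <= prodW W x y by apply: prodr_ge0 => i _; rewrite channel_ge0.
have first_ge0 : 0 <= expR (N%:R * mutinf Q W + t) * qout_prod y.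
  by rewrite mulr_ge0 ?expR_ge0 ?qout_prod_ge0.
have second_ge0 : 0 <= prodW W x y * (info_sum x y ^+ 2 / t ^+ 2).
  by rewrite mulr_ge0 // divr_ge0 ?sqr_ge0.
have [->|PW_neq0] := eqVneq (prodW W x y) 0; first by rewrite mul0r addr0.
have [S_le|S_gt] := lerP (info_sum x y) t.
  apply: le_trans _ (ler_wpDr second_ge0 (lexx _)).
  by rewrite prodW_expR // ler_wpM2r ?qout_prod_ge0 // ler_expR; lra.
have ratio_ge1 : 1 <= info_sum x y ^+ 2 / t ^+ 2.
  by rewrite ler_pdivlMr ?exprn_gt0 // mul1r !expr2; nra.
apply: le_trans _ (ler_wpDl first_ge0 (lexx _)).
by rewrite -{1}[prodW W x y]mulr1 ler_wpM2l.
Qed.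

Lemma moment2_info_sum :
  \sum_y prodW W x y * info_sum x y ^+ 2 = N%:R * cvar Q W.
Proof.
have centered := sum_prod_dist_sqr_centered
  (fun i => channel_sum1 W_channel (x i)) (fun i => sum_info_dev (x i)).
rewrite /prodW /info_sum centered cvar_info_dev -x_comp.
exact: sum_word_composition x N_gt0 (fun a => \sum_b W a b * info_dev a b ^+ 2).
Qed.

Lemma sum_prodW_le (D : pred {ffun 'I_N -> Y}) (t : R) : 0 < t ->
  \sum_(y | D y) prodW W x y <=
  expR (N%:R * mutinf Q W + t) * \sum_(y | D y) qout_prod y
  + N%:R * cvar Q W / t ^+ 2.
Proof.
move=> t_gt0; apply: le_trans (ler_sum _ (fun y _ => prodW_le_split y t_gt0)) _.
rewrite big_split /= -mulr_sumr lerD2l -moment2_info_sum mulr_suml.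
under [X in _ <= X]eq_bigr do rewrite -mulrA.
rewrite [X in _ <= X](bigID D) /= lerDl.
apply: sumr_ge0 => y _; rewrite mulr_ge0 ?divr_ge0 ?sqr_ge0 //.
by apply: prodr_ge0 => i _; rewrite channel_ge0.
Qed.

End Codeword.

Lemma avg_errE (N M : nat) (f : 'I_M -> {ffun 'I_N -> X})
    (phi : {ffun 'I_N -> Y} -> 'I_M) : (0 < M)%N ->
  avg_err W f phi = 1 - M%:R^-1 * \sum_m \sum_(y | phi y == m) prodW W (f m) y.
Proof.
move=> M_gt0; rewrite /avg_err.
have correct_compl m : \sum_(y | phi y != m) prodW W (f m) y
                       = 1 - \sum_(y | phi y == m) prodW W (f m) y.
  rewrite -(sum_prodW1 W_channel (f m)) [X in _ = X - _](bigID (fun y => phi y == m)) /=.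
  by rewrite addrC addrK.
under eq_bigr do rewrite correct_compl.
by rewrite sumrB sumr_const card_ord mulrBr mulVf // pnatr_eq0 -lt0n.
Qed.

Lemma avg_err_ge (N M : nat) (f : 'I_M -> {ffun 'I_N -> X})
    (phi : {ffun 'I_N -> Y} -> 'I_M) (t : R) :
  (0 < N)%N -> (0 < M)%N -> (forall m, composition (f m) = Q) -> 0 < t ->
  1 - expR (N%:R * mutinf Q W + t) / M%:R - N%:R * cvar Q W / t ^+ 2
  <= avg_err W f phi.
Proof.
move=> N_gt0 M_gt0 f_comp t_gt0.
have M_neq0 : (M%:R : R) != 0 by rewrite pnatr_eq0 -lt0n.
have qout_prod_sum1 : \sum_m \sum_(y | phi y == m) qout_prod y = 1.
  have <- : \sum_(y : {ffun 'I_N -> Y}) qout_prod y = \sum_m \sum_(y | phi y == m) qout_prod y.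
    by rewrite (partition_big phi xpredT).
  by apply: (sum_prod_dist1 (w := fun _ => qout Q W)) => i; case: (qout_dist W_channel Q_dist).
have correct_le : \sum_m \sum_(y | phi y == m) prodW W (f m) y
    <= expR (N%:R * mutinf Q W + t) + M%:R * (N%:R * cvar Q W / t ^+ 2).
  apply: le_trans (ler_sum _ (fun m _ => sum_prodW_le N_gt0 (f_comp m) _ t_gt0)) _.
  by rewrite big_split /= -mulr_sumr qout_prod_sum1 mulr1 sumr_const card_ord [M%:R * _]mulr_natl.
rewrite avg_errE // -addrA lerD2l -opprD lerN2.
apply: le_trans (ler_wpM2l _ correct_le) _; first by rewrite invr_ge0 ler0n.
by rewrite mulrDr mulKf // mulrC.
Qed.

End InformationDensity.

Theorem lemma13 (R : realType) (X Y : finType) (W : X -> Y -> R) (eps a : R)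
    (N : nat) :
  is_channel W ->
  2^-1 < eps -> eps < 1 ->
  0 < Veps W ->
  0 < a -> 2 / (1 - eps) < a ->
  (0 < N)%N ->
  let RN := capacity W + Num.sqrt (Veps W / N%:R) * Phiinv eps
            - N%:R^-1 * ln (1 - eps - 2 / a) in
  forall (f : 'I_(nmsg N RN) -> {ffun 'I_N -> X})
         (phi : {ffun 'I_N -> Y} -> 'I_(nmsg N RN)) (Q : X -> R),
  (forall m, composition (f m) = Q) ->
  cvar Q W < a^-1 * Veps W * (Phiinv eps) ^+ 2 ->
  eps < avg_err W f phi.
Proof.
move=> W_channel eps_gt eps_lt1 V_gt0 a_gt0 a_gt N_gt0 RN f phi Q f_comp cvar_lt.
have Nr_gt0 : (0 < N%:R :> R) by rewrite ltr0n.
have Q_dist : is_dist Q.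
  by rewrite -(f_comp (Ordinal (nmsg_gt0 N RN))); apply: composition_dist.
have Phiinv_gt0 : 0 < Phiinv eps.
  rewrite lt_def Phiinv_ge0 ?ltW // andbT; apply: contraTneq cvar_lt => ->.
  by rewrite expr0n mulr0 -leNgt cvar_ge0.
have c_gt0 : 0 < 1 - eps - 2 / a.
  have : 2 / a < 1 - eps by rewrite ltr_pdivrMr // mulrC -ltr_pdivrMr ?subr_gt0.
  lra.
pose t := N%:R * (Num.sqrt (Veps W / N%:R) * Phiinv eps).
have t_gt0 : 0 < t by rewrite !mulr_gt0 // sqrtr_gt0 divr_gt0.
have t_sqr : t ^+ 2 = N%:R * (Veps W * Phiinv eps ^+ 2).
  by rewrite /t !exprMn sqr_sqrtr ?divr_ge0 ?ltW //; field; rewrite gt_eqF.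
have first_le : expR (N%:R * mutinf Q W + t) / (nmsg N RN)%:R <= 1 - eps - 2 / a.
  apply: expR_div_nmsg_le => //.
  have -> : N%:R * RN = N%:R * capacity W + t - ln (1 - eps - 2 / a).
    by rewrite /RN /t; field; rewrite gt_eqF.
  have : mutinf Q W <= capacity W by apply: mutinf_le_capacity.
  move: Nr_gt0; nra.
have second_lt : N%:R * cvar Q W / t ^+ 2 < a^-1.
  by rewrite ltr_pdivrMr ?exprn_gt0 // t_sqr mulrCA ltr_pM2l // mulrA.
have := avg_err_ge W_channel Q_dist phi N_gt0 (nmsg_gt0 N RN) f_comp t_gt0.
have : 0 < a^-1 by rewrite invr_gt0.
lra.
Qed.
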